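(* Let $\Gamma=\{f_1,f_2,f_3\}$ be a smooth solution on $(0,T)\times I$ of $\partial_tf_i=-\nabla_s^2\vec\kappa_i-\tfrac12|\vec\kappa_i|^2\vec\kappa_i+\lambda_i\vec\kappa_i+\varphi_i\partial_sf_i$ with $\vec\kappa_i(t,0)=0$, and with initial data satisfying $f_1(0,0)=f_2(0,0)=f_3(0,0)$. Then $f_1(t,0)=f_2(t,0)=f_3(t,0)$ for all $t$ if and only if $\partial_tf_i(t,0)=\partial_tf_j(t,0)$ for all $t$ and all $i,j$. In that case, writing $A_i=\nabla_s^2\vec\kappa_i(t,0)$, $T_i=\partial_sf_i(t,0)$, $T_{ij}=\langle T_i,T_j\rangle$ and $\varphi_i=\varphi_i(t,0)$, the vector $(\varphi_1,\varphi_2,\varphi_3)$ solves $$M\begin{pmatrix}\varphi_1\\\varphi_2\\\varphi_3\end{pmatrix}=\begin{pmatrix}-\langle A_2+A_3,T_1\rangle\\-\langle A_1+A_3,T_2\rangle\\-\langle A_1+A_2,T_3\rangle\end{pmatrix},\qquad M=\begin{pmatrix}2&-T_{12}&-T_{13}\\-T_{12}&2&-T_{23}\\-T_{13}&-T_{23}&2\end{pmatrix}.$$ Moreover, for any unit vectors $T_1,T_2,T_3\in\mathbb{R}^n$, $\det M=8-2(T_{12}^2+T_{23}^2+T_{13}^2)-2T_{12}T_{23}T_{13}\ge2(1-T_{12}T_{23}T_{13})\ge0$, with $\det M=0$ if and only if $T_1=T_2=T_3$ or $T_i=T_{i+1}$ and $T_{i+2}=-T_i$ for some $i$ (indices mod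 3); in particular $M$ is positive definite whenever $\dim\operatorname{span}\{T_1,T_2,T_3\}\ge2$.
   Context: $I=[0,1]$; $ds=|\partial_xf_i|dx$, $\partial_s=|\partial_xf_i|^{-1}\partial_x$, $\vec\kappa_i=\partial_s^2f_i$, $\nabla_s\phi=\partial_s\phi-\langle\partial_s\phi,\partial_sf_i\rangle\partial_sf_i$; $\lambda_i$ constants, $\varphi_i$ smooth scalar functions. *)

From Stdlib Require Import Reals Lra Lia Arith ClassicalEpsilon.
Open Scope R_scope.

(* Vectors of R^n are represented as nat -> R; only components k < n matter. *)
Definition vec := nat -> R.

Fixpoint sumR (m : nat) (F : nat -> R) : R :=
  match m with O => 0 | S p => sumR p F + F p end.

Definition inner (n : nat) (u v : vec) : R := sumR n (fun k => u k * v k).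

Definition veq (n : nat) (u v : vec) : Prop := forall k, (k < n)%nat -> u k = v k.

Definition Iset (x : R) : Prop := 0 <= x <= 1.

(* derivative of h at x relative to the set D (one-sided at endpoints of I) *)
Definition has_deriv_within (D : R -> Prop) (h : R -> R) (x l : R) : Prop :=
  limit1_in (fun y => (h y - h x) / (y - x)) (fun y => D y /\ y <> x) l x.

Definition dt (g : R -> R -> R) (t x : R) : R :=
  epsilon (inhabits 0) (fun l => derivable_pt_lim (fun s => g s x) t l).
Definition dx (g : R -> R -> R) (t x : R) : R :=
  epsilon (inhabits 0) (fun l => has_deriv_within Iset (fun y => g t y) x l).

Fixpoint pd (w : list bool) (g : R -> R -> R) : R -> R -> R :=
  match w with
  | nil => g
  | cons b w' => if b then dt (pd w' g) else dx (pd w' g)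
  end.

Definition cont_on (D : R -> R -> Prop) (h : R -> R -> R) : Prop :=
  forall t x, D t x -> forall eps, eps > 0 ->
    exists del, del > 0 /\
      forall t' x', D t' x' -> Rabs (t' - t) < del -> Rabs (x' - x) < del ->
        Rabs (h t' x' - h t x) < eps.

Definition smooth_on (T : R) (g : R -> R -> R) : Prop :=
  forall w : list bool,
    cont_on (fun t x => 0 < t < T /\ Iset x) (pd w g) /\
    forall t x, 0 < t < T -> Iset x ->
      derivable_pt_lim (fun s => pd w g s x) t (pd (true :: w) g t x) /\
      has_deriv_within Iset (fun y => pd w g t y) x (pd (false :: w) g t x).

Definition vcomp (f : R -> R -> vec) (k : nat) : R -> R -> R := fun t x => f t x k.
Definition dtv (f : R -> R -> vec) (t x : R) : vec := fun k => dt (vcomp f k) t x.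
Definition dxv (f : R -> R -> vec) (t x : R) : vec := fun k => dx (vcomp f k) t x.

Definition speed (n : nat) (f : R -> R -> vec) (t x : R) : R :=
  sqrt (inner n (dxv f t x) (dxv f t x)).

Definition dsv (n : nat) (f : R -> R -> vec) (phi : R -> R -> vec) (t x : R) : vec :=
  fun k => dx (vcomp phi k) t x / speed n f t x.

Definition tangent (n : nat) (f : R -> R -> vec) : R -> R -> vec := dsv n f f.
Definition kappa (n : nat) (f : R -> R -> vec) : R -> R -> vec :=
  dsv n f (tangent n f).

Definition nablas (n : nat) (f : R -> R -> vec) (phi : R -> R -> vec) : R -> R -> vec :=
  fun t x k => dsv n f phi t x k
               - inner n (dsv n f phi t x) (tangent n f t x) * tangent n f t x k.

(* 3x3 matrices as nat -> nat -> R (indices 0,1,2) *)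
Definition det3 (m : nat -> nat -> R) : R :=
  let a i j := m i j in
  a 0%nat 0%nat * (a 1%nat 1%nat * a 2%nat 2%nat - a 1%nat 2%nat * a 2%nat 1%nat)
  - a 0%nat 1%nat * (a 1%nat 0%nat * a 2%nat 2%nat - a 1%nat 2%nat * a 2%nat 0%nat)
  + a 0%nat 2%nat * (a 1%nat 0%nat * a 2%nat 1%nat - a 1%nat 1%nat * a 2%nat 0%nat).

Definition posdef3 (m : nat -> nat -> R) : Prop :=
  forall v : nat -> R, (v 0%nat <> 0 \/ v 1%nat <> 0 \/ v 2%nat <> 0) ->
    0 < sumR 3 (fun i => sumR 3 (fun j => v i * m i j * v j)).

(* the matrix M built from T_0, T_1, T_2 (paper's T_1, T_2, T_3) *)
Definition Mmat (n : nat) (Tv : nat -> vec) (i j : nat) : R :=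
  if Nat.eqb i j then 2 else - inner n (Tv i) (Tv j).

Definition in_span3 (n : nat) (Tv : nat -> vec) (u : vec) : Prop :=
  exists c : nat -> R, veq n u (fun k => sumR 3 (fun i => c i * Tv i k)).

Definition lin_indep2 (n : nat) (u v : vec) : Prop :=
  forall a b, veq n (fun k => a * u k + b * v k) (fun _ => 0) -> a = 0 /\ b = 0.

Definition span_dim_ge2 (n : nat) (Tv : nat -> vec) : Prop :=
  exists u v, in_span3 n Tv u /\ in_span3 n Tv v /\ lin_indep2 n u v.

(* Concurrency of the junction is equivalent to equal velocities there: one direction
   differentiates the identities f_i(t,0) = f_j(t,0) in t, the other integrates via the mean
   value theorem and continuity at t = 0.  Since the curvatures vanish at the junction, the
   common velocity V equals -A_i + phi_i T_i for each i; pairing it with the unit tangents and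
   using <A_i, T_i> = 0 gives <V, T_i> = phi_i, hence the linear system for phi.
   The quadratic form of M (2 on the diagonal, -<T_i, T_j> off it) is
   |v_0 T_0 - v_1 T_1|^2 + |v_1 T_1 - v_2 T_2|^2 + |v_0 T_0 - v_2 T_2|^2; it can only vanish
   at v <> 0 if all T_i are parallel.  Writing a, b, c for the pairings T_ij,
   det M - 2 (1 - abc) = 2 ((1 - a^2) + (1 - b^2) + (1 - c^2)) >= 0, so det M = 0 forces
   a, b, c = ±1 with abc = 1. *)

From Stdlib Require Import Reals Lra Lia Arith ClassicalEpsilon.
Open Scope R_scope.

Lemma sumR_ext n F G : (forall k, (k < n)%nat -> F k = G k) -> sumR n F = sumR n G.
Proof.
  induction n as [|n IH]; intros H; simpl; [reflexivity|].
  rewrite IH, H; auto; intros; apply H; lia.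
Qed.

Lemma sumR_add n F G : sumR n (fun k => F k + G k) = sumR n F + sumR n G.
Proof. induction n as [|n IH]; simpl; [ring|]. rewrite IH. ring. Qed.

Lemma sumR_scal n c F : sumR n (fun k => c * F k) = c * sumR n F.
Proof. induction n as [|n IH]; simpl; [ring|]. rewrite IH. ring. Qed.

Lemma sumR_ge0 n F : (forall k, (k < n)%nat -> 0 <= F k) -> 0 <= sumR n F.
Proof.
  induction n as [|n IH]; intros H; simpl; [lra|].
  assert (0 <= F n) by (apply H; lia).
  assert (0 <= sumR n F) by (apply IH; intros; apply H; lia).
  lra.
Qed.

Lemma sumR_eq0 n F : (forall k, (k < n)%nat -> 0 <= F k) -> sumR n F = 0 ->
  forall k, (k < n)%nat -> F k = 0.
Proof.
  induction n as [|n IH]; intros H S k Hk; [lia|]. simpl in S.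
  assert (0 <= F n) by (apply H; lia).
  assert (0 <= sumR n F) by (apply sumR_ge0; intros; apply H; lia).
  destruct (Nat.eq_dec k n) as [->|]; [lra|].
  apply IH; [intros; apply H; lia | lra | lia].
Qed.

Lemma inner_sym n u v : inner n u v = inner n v u.
Proof. apply sumR_ext. intros; ring. Qed.

Lemma inner_veq_l n u u' v : veq n u u' -> inner n u v = inner n u' v.
Proof. intros H. apply sumR_ext. intros k Hk. rewrite H; auto. Qed.

Lemma inner_veq_r n u v v' : veq n v v' -> inner n u v = inner n u v'.
Proof. intros H. apply sumR_ext. intros k Hk. rewrite H; auto. Qed.

Lemma inner_lincomb_l n a b u v w :
  inner n (fun k => a * u k + b * v k) w = a * inner n u w + b * inner n v w.
Proof.
  unfold inner. rewrite <- !sumR_scal, <- sumR_add. apply sumR_ext. intros; ring.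
Qed.

Lemma inner_scale n a b u v :
  inner n (fun k => a * u k) (fun k => b * v k) = a * b * inner n u v.
Proof. unfold inner. rewrite <- sumR_scal. apply sumR_ext. intros; ring. Qed.

Lemma inner_oppr n u v : inner n u (fun k => - v k) = - inner n u v.
Proof.
  unfold inner. rewrite (sumR_ext n _ (fun k => -1 * (u k * v k))), sumR_scal; [ring|].
  intros; ring.
Qed.

Lemma inner_lincomb_self n a b u v :
  inner n (fun k => a * u k + b * v k) (fun k => a * u k + b * v k)
  = a * a * inner n u u + 2 * a * b * inner n u v + b * b * inner n v v.
Proof.
  rewrite inner_lincomb_l, !(inner_sym n _ (fun k => a * u k + b * v k)),
    !inner_lincomb_l, (inner_sym n v u).
  ring.
Qed.

Lemma inner_self_ge0 n u : 0 <= inner n u u.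
Proof. apply sumR_ge0. intros. nra. Qed.

Lemma inner_self_eq0 n u : inner n u u = 0 -> veq n u (fun _ => 0).
Proof.
  intros H k Hk.
  assert (u k * u k = 0) by (apply (sumR_eq0 n (fun k => u k * u k)); auto; intros; nra).
  nra.
Qed.

Section UnitVectors.
Variables (n : nat) (u v : vec).
Hypotheses (u_unit : inner n u u = 1) (v_unit : inner n v v = 1).

Lemma unit_inner_bound : -1 <= inner n u v <= 1.
Proof.
  pose proof (inner_self_ge0 n (fun k => 1 * u k + (-1) * v k)).
  pose proof (inner_self_ge0 n (fun k => 1 * u k + 1 * v k)).
  rewrite inner_lincomb_self in *. lra.
Qed.

Lemma unit_veq_of_inner_eq1 : inner n u v = 1 -> veq n u v.
Proof.
  intros H k Hk.
  assert (E : inner n (fun k => 1 * u k + (-1) * v k) (fun k => 1 * u k + (-1) * v k) = 0)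
    by (rewrite inner_lincomb_self; lra).
  pose proof (inner_self_eq0 _ _ E k Hk). simpl in *. lra.
Qed.

Lemma unit_veq_opp_of_inner_eqN1 : inner n u v = -1 -> veq n v (fun k => - u k).
Proof.
  intros H k Hk.
  assert (E : inner n (fun k => 1 * u k + 1 * v k) (fun k => 1 * u k + 1 * v k) = 0)
    by (rewrite inner_lincomb_self; lra).
  pose proof (inner_self_eq0 _ _ E k Hk). simpl in *. lra.
Qed.

Lemma unit_scale_eq0 c : veq n (fun k => c * u k) (fun _ => 0) -> c = 0.
Proof.
  intros H.
  assert (E : inner n (fun k => c * u k) (fun k => c * u k) = 0).
  { rewrite (inner_veq_l _ _ _ _ H). unfold inner; cbv beta.
    rewrite sumR_scal. ring. }
  rewrite inner_scale, u_unit in E. nra.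
Qed.

Lemma opposite_pair_inner (w : vec) : veq n u v -> veq n w (fun k => - u k) ->
  inner n u v = 1 /\ inner n u w = -1 /\ inner n v w = -1.
Proof.
  intros Euv Ewu.
  assert (Huw : inner n u w = -1)
    by (rewrite (inner_veq_r _ _ _ _ Ewu), inner_oppr, u_unit; reflexivity).
  split; [rewrite <- (inner_veq_r _ _ _ _ Euv); exact u_unit|].
  split; [exact Huw|]. rewrite <- (inner_veq_l _ _ _ _ Euv). exact Huw.
Qed.

End UnitVectors.

Lemma gram3_det_ge a b c : -1 <= a <= 1 -> -1 <= b <= 1 -> -1 <= c <= 1 ->
  8 - 2 * (a ^ 2 + b ^ 2 + c ^ 2) - 2 * a * b * c >= 2 * (1 - a * b * c).
Proof. intros. nra. Qed.

Lemma prod3_le1 a b c : -1 <= a <= 1 -> -1 <= b <= 1 -> -1 <= c <= 1 -> a * b * c <= 1.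
Proof. intros. assert (-1 <= a * b <= 1) by (split; nra). nra. Qed.

Lemma sqr_eq1 x : x * x = 1 -> x = 1 \/ x = -1.
Proof. intros. destruct (Rle_lt_dec 0 x); [left | right]; nra. Qed.

Lemma gram3_det_eq0 a b c : -1 <= a <= 1 -> -1 <= b <= 1 -> -1 <= c <= 1 ->
  8 - 2 * (a ^ 2 + b ^ 2 + c ^ 2) - 2 * a * b * c = 0 ->
  (a = 1 \/ a = -1) /\ (b = 1 \/ b = -1) /\ (c = 1 \/ c = -1) /\ a * b * c = 1.
Proof.
  intros Ha Hb Hc H.
  pose proof (prod3_le1 a b c Ha Hb Hc).
  assert (a * a = 1) by nra. assert (b * b = 1) by nra. assert (c * c = 1) by nra.
  split; [apply sqr_eq1; auto|]. split; [apply sqr_eq1; auto|].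
  split; [apply sqr_eq1; auto | nra].
Qed.

Lemma collinear_not_span_dim_ge2 n Tv (w : vec) (mu : nat -> R) :
  (forall j, (j < 3)%nat -> veq n (Tv j) (fun k => mu j * w k)) -> ~ span_dim_ge2 n Tv.
Proof.
  intros H [u [v [[cu Hu] [[cv Hv] Hind]]]].
  assert (Ealong : forall cf : nat -> R, veq n (fun k => sumR 3 (fun i => cf i * Tv i k))
            (fun k => sumR 3 (fun i => cf i * mu i) * w k)).
  { intros cf k Hk. simpl. rewrite !H by lia. ring. }
  set (al := sumR 3 (fun i => cu i * mu i)) in *.
  set (be := sumR 3 (fun i => cv i * mu i)) in *.
  assert (Eu : veq n u (fun k => al * w k))
    by (intros k Hk; rewrite Hu, (Ealong cu); auto).
  assert (Ev : veq n v (fun k => be * w k))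
    by (intros k Hk; rewrite Hv, (Ealong cv); auto).
  (* [be u - al v = 0] and [1 u + 0 v = 0] (if [al = 0]) contradict independence *)
  destruct (Hind be (- al)) as [_ Hal].
  { intros k Hk. rewrite Eu, Ev by auto. ring. }
  destruct (Hind 1 0) as [H1 _]; [|lra].
  intros k Hk. rewrite Eu by auto. replace al with 0 by lra. ring.
Qed.

Section GramMatrix.
Variables (n : nat) (Tv : nat -> vec).
Local Notation T01 := (inner n (Tv 0%nat) (Tv 1%nat)).
Local Notation T12 := (inner n (Tv 1%nat) (Tv 2%nat)).
Local Notation T02 := (inner n (Tv 0%nat) (Tv 2%nat)).

Lemma det3_Mmat : det3 (Mmat n Tv) = 8 - 2 * (T01 ^ 2 + T12 ^ 2 + T02 ^ 2) - 2 * T01 * T12 * T02.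
Proof.
  unfold det3, Mmat; simpl.
  rewrite (inner_sym n (Tv 1%nat) (Tv 0%nat)), (inner_sym n (Tv 2%nat) (Tv 0%nat)),
    (inner_sym n (Tv 2%nat) (Tv 1%nat)).
  ring.
Qed.

Hypothesis Tv_unit : forall i, (i < 3)%nat -> inner n (Tv i) (Tv i) = 1.

Let U0 : inner n (Tv 0%nat) (Tv 0%nat) = 1. Proof. apply Tv_unit; lia. Qed.
Let U1 : inner n (Tv 1%nat) (Tv 1%nat) = 1. Proof. apply Tv_unit; lia. Qed.
Let U2 : inner n (Tv 2%nat) (Tv 2%nat) = 1. Proof. apply Tv_unit; lia. Qed.

Lemma Mmat_offdiag_bounds : -1 <= T01 <= 1 /\ -1 <= T12 <= 1 /\ -1 <= T02 <= 1.
Proof. repeat split; apply unit_inner_bound; auto. Qed.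

Lemma det3_Mmat_ge : det3 (Mmat n Tv) >= 2 * (1 - T01 * T12 * T02).
Proof.
  destruct Mmat_offdiag_bounds as (? & ? & ?).
  rewrite det3_Mmat. apply gram3_det_ge; auto.
Qed.

Lemma det3_Mmat_bound_ge0 : 2 * (1 - T01 * T12 * T02) >= 0.
Proof. destruct Mmat_offdiag_bounds as (? & ? & ?). pose proof (prod3_le1 T01 T12 T02). lra. Qed.

Lemma det3_Mmat_eq0 :
  det3 (Mmat n Tv) = 0 <->
  ((veq n (Tv 0%nat) (Tv 1%nat) /\ veq n (Tv 1%nat) (Tv 2%nat)) \/
   exists i, (i < 3)%nat /\ veq n (Tv i) (Tv ((i + 1) mod 3)%nat) /\
             veq n (Tv ((i + 2) mod 3)%nat) (fun k => - Tv i k)).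
Proof.
  rewrite det3_Mmat. split.
  - destruct Mmat_offdiag_bounds as (B01 & B12 & B02). intros D0.
    destruct (gram3_det_eq0 _ _ _ B01 B12 B02 D0) as ([E01|E01] & [E12|E12] & [E02|E02] & P);
      rewrite E01, E12, E02 in P; try lra.
    + left. split; apply unit_veq_of_inner_eq1; auto.
    + right. exists 0%nat. split; [lia|]. split.
      * apply unit_veq_of_inner_eq1; auto.
      * apply unit_veq_opp_of_inner_eqN1; auto.
    + right. exists 1%nat. split; [lia|]. split.
      * apply unit_veq_of_inner_eq1; auto.
      * apply unit_veq_opp_of_inner_eqN1; auto. rewrite inner_sym; exact E01.
    + right. exists 2%nat. split; [lia|]. split.
      * apply unit_veq_of_inner_eq1; auto. rewrite inner_sym; exact E02.
      * apply unit_veq_opp_of_inner_eqN1; auto. rewrite inner_sym; exact E12.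
  - intros [[E01 E12] | [i [Hi [Eq Eopp]]]].
    + assert (E02 : veq n (Tv 0%nat) (Tv 2%nat)) by (intros k Hk; rewrite E01, E12; auto).
      rewrite <- (inner_veq_r _ _ _ _ E01), <- (inner_veq_r _ _ _ _ E12),
        <- (inner_veq_r _ _ _ _ E02), U0, U1.
      ring.
    + destruct i as [|[|[|i]]]; try lia; simpl in Eq, Eopp.
      * destruct (opposite_pair_inner _ _ _ U0 _ Eq Eopp) as (-> & -> & ->). ring.
      * destruct (opposite_pair_inner _ _ _ U1 _ Eq Eopp) as (E12 & E10 & E20).
        rewrite E12, (inner_sym n (Tv 0%nat) (Tv 1%nat)), E10,
          (inner_sym n (Tv 0%nat) (Tv 2%nat)), E20.
        ring.
      * destruct (opposite_pair_inner _ _ _ U2 _ Eq Eopp) as (E20 & E21 & E01).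
        rewrite E01, (inner_sym n (Tv 1%nat) (Tv 2%nat)), E21,
          (inner_sym n (Tv 0%nat) (Tv 2%nat)), E20.
        ring.
Qed.

Lemma Mmat_quadratic_form (v : nat -> R) :
  sumR 3 (fun i => sumR 3 (fun j => v i * Mmat n Tv i j * v j)) =
    inner n (fun k => v 0%nat * Tv 0%nat k + - v 1%nat * Tv 1%nat k)
            (fun k => v 0%nat * Tv 0%nat k + - v 1%nat * Tv 1%nat k)
  + inner n (fun k => v 1%nat * Tv 1%nat k + - v 2%nat * Tv 2%nat k)
            (fun k => v 1%nat * Tv 1%nat k + - v 2%nat * Tv 2%nat k)
  + inner n (fun k => v 0%nat * Tv 0%nat k + - v 2%nat * Tv 2%nat k)
            (fun k => v 0%nat * Tv 0%nat k + - v 2%nat * Tv 2%nat k).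
Proof.
  rewrite !inner_lincomb_self, U0, U1, U2.
  unfold Mmat; simpl.
  rewrite (inner_sym n (Tv 1%nat) (Tv 0%nat)), (inner_sym n (Tv 2%nat) (Tv 0%nat)),
    (inner_sym n (Tv 2%nat) (Tv 1%nat)).
  ring.
Qed.

Lemma Mmat_posdef : span_dim_ge2 n Tv -> posdef3 (Mmat n Tv).
Proof.
  intros Hspan v Hv. rewrite Mmat_quadratic_form.
  set (w := fun i k => v i * Tv i k).
  set (d01 := fun k => v 0%nat * Tv 0%nat k + - v 1%nat * Tv 1%nat k).
  set (d12 := fun k => v 1%nat * Tv 1%nat k + - v 2%nat * Tv 2%nat k).
  set (d02 := fun k => v 0%nat * Tv 0%nat k + - v 2%nat * Tv 2%nat k).
  pose proof (inner_self_ge0 n d01). pose proof (inner_self_ge0 n d12).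
  pose proof (inner_self_ge0 n d02).
  apply Rnot_le_lt. intros Q0.
  assert (Z01 : veq n (w 0%nat) (w 1%nat)).
  { intros k Hk. pose proof (inner_self_eq0 n d01 ltac:(lra) k Hk). unfold d01, w in *; lra. }
  assert (Z12 : veq n (w 1%nat) (w 2%nat)).
  { intros k Hk. pose proof (inner_self_eq0 n d12 ltac:(lra) k Hk). unfold d12, w in *; lra. }
  assert (Zj : forall j, (j < 3)%nat -> veq n (w j) (w 0%nat)).
  { intros [|[|[|j]]] Hj k Hk; try lia; [reflexivity | symmetry; auto |].
    rewrite <- Z12, <- Z01 by auto. reflexivity. }
  assert (Nz : forall j, (j < 3)%nat -> v j <> 0).
  { intros j Hj Ej.
    assert (W0 : forall i, (i < 3)%nat -> veq n (w i) (fun _ => 0)).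
    { intros i Hi k Hk. rewrite (Zj i Hi k Hk), <- (Zj j Hj k Hk). unfold w. rewrite Ej. ring. }
    destruct Hv as [N | [N | N]]; apply N;
      (eapply unit_scale_eq0; [apply Tv_unit | apply W0]); lia. }
  apply (collinear_not_span_dim_ge2 n Tv (w 0%nat) (fun j => / v j)); [|exact Hspan].
  intros j Hj k Hk. rewrite <- (Zj j Hj k Hk). unfold w. field. auto.
Qed.

End GramMatrix.

Lemma smooth_on_dt T g t x : smooth_on T g -> 0 < t < T -> Iset x ->
  derivable_pt_lim (fun s => g s x) t (dt g t x).
Proof. intros H Ht Hx. exact (proj1 (proj2 (H nil) t x Ht Hx)). Qed.

Lemma dt_eq_of_slice_eq T g1 g2 x : smooth_on T g1 -> smooth_on T g2 -> Iset x ->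
  (forall s, 0 < s < T -> g1 s x = g2 s x) -> forall t, 0 < t < T -> dt g1 t x = dt g2 t x.
Proof.
  intros S1 S2 Hx E t Ht.
  apply (uniqueness_limite (fun s => g2 s x) t); [|apply smooth_on_dt with T; auto].
  apply (derivable_pt_lim_locally_ext (fun s => g1 s x) _ t 0 T); auto.
  apply smooth_on_dt with T; auto.
Qed.

Lemma const_on_of_derive0 (h : R -> R) a b :
  (forall s, a < s < b -> derivable_pt_lim h s 0) ->
  forall s1 s2, a < s1 < b -> a < s2 < b -> h s1 = h s2.
Proof.
  intros D.
  assert (Hlt : forall s1 s2, a < s1 < b -> a < s2 < b -> s1 < s2 -> h s1 = h s2).
  { intros s1 s2 H1 H2 H12.
    destruct (MVT_cor2 h (fun _ => 0) s1 s2 H12) as [c [Hc _]]; [intros; apply D; lra | lra]. }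
  intros s1 s2 H1 H2. destruct (Rtotal_order s1 s2) as [|[->|]]; auto.
  symmetry; auto.
Qed.

Lemma limit1_in_const_right (h : R -> R) T c : 0 < T ->
  (forall s, 0 < s < T -> h s = c) -> limit1_in h (fun s => 0 <= s < T) (h 0) 0 -> h 0 = c.
Proof.
  intros HT Hc Hlim. apply (single_limit h (fun s => 0 < s < T) _ _ 0).
  - intros alp Halp. exists (Rmin alp T / 2).
    pose proof (Rmin_l alp T). pose proof (Rmin_r alp T). pose proof (Rmin_pos alp T Halp HT).
    unfold Rdist. rewrite Rminus_0_r, Rabs_right; lra.
  - intros eps Heps. destruct (Hlim eps Heps) as [del [Hdel P]].
    exists del. split; [exact Hdel|]. intros s [Hs Hd]. apply P. split; [lra | exact Hd].
  - intros eps Heps. exists 1. split; [lra|]. intros s [Hs _]. simpl. unfold Rdist.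
    rewrite Hc, Rminus_diag, Rabs_R0; auto.
Qed.

Lemma cont_on_slice_limit T g x : 0 < T -> Iset x ->
  cont_on (fun t x => 0 <= t < T /\ Iset x) g ->
  limit1_in (fun s => g s x) (fun s => 0 <= s < T) (g 0 x) 0.
Proof.
  intros HT Hx C eps Heps.
  destruct (C 0 x ltac:(split; [lra | exact Hx]) eps Heps) as [del [Hdel P]].
  exists del. split; [exact Hdel|]. intros s [Hs Hd]. simpl in *. unfold Rdist in *.
  apply P; auto. rewrite Rminus_diag, Rabs_R0. exact Hdel.
Qed.

Lemma slice_eq_of_dt_eq T g1 g2 x : 0 < T -> Iset x ->
  smooth_on T g1 -> smooth_on T g2 ->
  cont_on (fun t x => 0 <= t < T /\ Iset x) g1 -> cont_on (fun t x => 0 <= t < T /\ Iset x) g2 ->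
  g1 0 x = g2 0 x -> (forall t, 0 < t < T -> dt g1 t x = dt g2 t x) ->
  forall t, 0 < t < T -> g1 t x = g2 t x.
Proof.
  intros HT Hx S1 S2 C1 C2 E0 Ed t Ht.
  set (h := fun s => g1 s x - g2 s x).
  assert (Hconst : forall s, 0 < s < T -> h s = h t).
  { intros s Hs. apply (const_on_of_derive0 h 0 T); auto. clear s Hs. intros s Hs.
    replace 0 with (dt g1 s x - dt g2 s x) by (rewrite Ed; auto; ring).
    apply derivable_pt_lim_minus; apply smooth_on_dt with T; auto. }
  assert (Hh0 : h 0 = h t).
  { apply limit1_in_const_right with T; auto.
    apply limit_minus; apply cont_on_slice_limit; auto. }
  unfold h in Hh0. lra.
Qed.

Lemma tangent_unit n f t x : 0 < speed n f t x ->
  inner n (tangent n f t x) (tangent n f t x) = 1.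
Proof.
  intros Hs. set (s := speed n f t x) in *.
  assert (Hss : s * s = inner n (dxv f t x) (dxv f t x)).
  { apply sqrt_sqrt. apply inner_self_ge0. }
  transitivity (inner n (fun k => / s * dxv f t x k) (fun k => / s * dxv f t x k)).
  - apply sumR_ext. intros k _. unfold tangent, dsv, dxv. fold s. field. lra.
  - rewrite inner_scale, <- Hss. field. lra.
Qed.

Lemma nablas_orthogonal n f Y t x : 0 < speed n f t x ->
  inner n (nablas n f Y t x) (tangent n f t x) = 0.
Proof.
  intros Hs. set (D := dsv n f Y t x). set (Tg := tangent n f t x).
  transitivity (inner n (fun k => 1 * D k + (- inner n D Tg) * Tg k) Tg).
  - apply sumR_ext. intros k _. unfold nablas. fold D Tg. ring.
  - rewrite inner_lincomb_l. unfold Tg. rewrite tangent_unit by exact Hs. ring.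
Qed.

Lemma junction_tangential_system n (A Tg : nat -> vec) (p : nat -> R) (V : vec) :
  (forall j, (j < 3)%nat -> inner n (Tg j) (Tg j) = 1) ->
  (forall j, (j < 3)%nat -> inner n (A j) (Tg j) = 0) ->
  (forall j, (j < 3)%nat -> veq n V (fun k => - A j k + p j * Tg j k)) ->
  forall i, (i < 3)%nat ->
    sumR 3 (fun j => Mmat n Tg i j * p j) =
    - (inner n (A ((i + 1) mod 3)%nat) (Tg i) + inner n (A ((i + 2) mod 3)%nat) (Tg i)).
Proof.
  intros Hunit Hnormal HV.
  assert (Hcomp : forall i j, (j < 3)%nat ->
            inner n V (Tg i) = - inner n (A j) (Tg i) + p j * inner n (Tg j) (Tg i)).
  { intros i j Hj. rewrite (inner_veq_l _ _ _ _ (HV j Hj)).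
    replace (- inner n (A j) (Tg i)) with (-1 * inner n (A j) (Tg i)) by ring.
    rewrite <- inner_lincomb_l. apply inner_veq_l. intros k _. ring. }
  assert (Hp : forall i, (i < 3)%nat -> inner n V (Tg i) = p i).
  { intros i Hi. rewrite (Hcomp i i Hi), Hunit, Hnormal by exact Hi. ring. }
  intros i Hi.
  pose proof (Hcomp i 0%nat ltac:(lia)). pose proof (Hcomp i 1%nat ltac:(lia)).
  pose proof (Hcomp i 2%nat ltac:(lia)). pose proof (Hp i Hi).
  destruct i as [|[|[|i]]]; try lia; unfold Mmat; simpl in *;
    rewrite ?(inner_sym n (Tg 1%nat) (Tg 0%nat)), ?(inner_sym n (Tg 2%nat) (Tg 0%nat)),
      ?(inner_sym n (Tg 2%nat) (Tg 1%nat)) in *; lra.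
Qed.

Definition concurrent_at n (f : nat -> R -> R -> vec) t :=
  veq n (f 0%nat t 0) (f 1%nat t 0) /\ veq n (f 1%nat t 0) (f 2%nat t 0).

Section TripleJunction.
Variables (n : nat) (T : R) (f : nat -> R -> R -> vec) (lambda : nat -> R)
  (phi : nat -> R -> R -> R).
Hypothesis T_pos : 0 < T.
Hypothesis f_smooth : forall i k, (i < 3)%nat -> (k < n)%nat -> smooth_on T (vcomp (f i) k).
Hypothesis f_cont : forall i k, (i < 3)%nat -> (k < n)%nat ->
  cont_on (fun t x => 0 <= t < T /\ Iset x) (vcomp (f i) k).
Hypothesis speed_pos : forall i t x, (i < 3)%nat -> 0 < t < T -> Iset x -> 0 < speed n (f i) t x.
Hypothesis flow : forall i t x k, (i < 3)%nat -> 0 < t < T -> Iset x -> (k < n)%nat ->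
  dtv (f i) t x k =
    - nablas n (f i) (nablas n (f i) (kappa n (f i))) t x k
    - / 2 * inner n (kappa n (f i) t x) (kappa n (f i) t x) * kappa n (f i) t x k
    + lambda i * kappa n (f i) t x k
    + phi i t x * tangent n (f i) t x k.
Hypothesis kappa_junction : forall i t k, (i < 3)%nat -> 0 < t < T -> (k < n)%nat ->
  kappa n (f i) t 0 k = 0.
Hypothesis concurrent_init : concurrent_at n f 0.

Let I0 : Iset 0. Proof. unfold Iset; lra. Qed.

Lemma junction_velocity_eq :
  (forall t, 0 < t < T -> concurrent_at n f t) ->
  forall t, 0 < t < T -> forall i, (i < 3)%nat -> veq n (dtv (f i) t 0) (dtv (f 0%nat) t 0).
Proof.
  intros Hconc t Ht i Hi k Hk.
  apply (dt_eq_of_slice_eq T); auto.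
  intros s Hs. destruct (Hconc s Hs) as [E01 E12]. unfold vcomp.
  destruct i as [|[|[|i]]]; try lia; [reflexivity | symmetry; auto |].
  rewrite <- E12, <- E01 by exact Hk. reflexivity.
Qed.

Lemma junction_velocities_agree :
  (forall t, 0 < t < T -> concurrent_at n f t) ->
  forall t, 0 < t < T -> forall i j, (i < 3)%nat -> (j < 3)%nat ->
    veq n (dtv (f i) t 0) (dtv (f j) t 0).
Proof.
  intros Hconc t Ht i j Hi Hj k Hk.
  rewrite (junction_velocity_eq Hconc t Ht i Hi k Hk), (junction_velocity_eq Hconc t Ht j Hj k Hk).
  reflexivity.
Qed.

Lemma concurrent_of_junction_velocity_eq :
  (forall t, 0 < t < T -> forall i j, (i < 3)%nat -> (j < 3)%nat ->
     veq n (dtv (f i) t 0) (dtv (f j) t 0)) ->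
  forall t, 0 < t < T -> concurrent_at n f t.
Proof.
  intros Hvel t Ht. destruct concurrent_init as [E01 E12].
  split; intros k Hk.
  - apply (slice_eq_of_dt_eq T (vcomp (f 0%nat) k) (vcomp (f 1%nat) k)); auto.
    + apply E01, Hk.
    + intros s Hs. apply Hvel; auto.
  - apply (slice_eq_of_dt_eq T (vcomp (f 1%nat) k) (vcomp (f 2%nat) k)); auto.
    + apply E12, Hk.
    + intros s Hs. apply Hvel; auto.
Qed.

Lemma junction_velocity_decomp t i : 0 < t < T -> (i < 3)%nat ->
  veq n (dtv (f i) t 0) (fun k => - nablas n (f i) (nablas n (f i) (kappa n (f i))) t 0 k
                                 + phi i t 0 * tangent n (f i) t 0 k).
Proof. intros Ht Hi k Hk. rewrite flow, kappa_junction by auto. ring. Qed.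

Lemma junction_phi_system :
  (forall t, 0 < t < T -> concurrent_at n f t) ->
  forall t, 0 < t < T -> forall i, (i < 3)%nat ->
    sumR 3 (fun j => Mmat n (fun l => tangent n (f l) t 0) i j * phi j t 0) =
    - (inner n (nablas n (f ((i + 1) mod 3)%nat)
                  (nablas n (f ((i + 1) mod 3)%nat) (kappa n (f ((i + 1) mod 3)%nat))) t 0)
               (tangent n (f i) t 0)
       + inner n (nablas n (f ((i + 2) mod 3)%nat)
                  (nablas n (f ((i + 2) mod 3)%nat) (kappa n (f ((i + 2) mod 3)%nat))) t 0)
               (tangent n (f i) t 0)).
Proof.
  intros Hconc t Ht.
  apply (junction_tangential_system n (fun j => nablas n (f j) (nablas n (f j) (kappa n (f j))) t 0)
           (fun j => tangent n (f j) t 0) (fun j => phi j t 0) (dtv (f 0%nat) t 0)).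
  - intros j Hj. apply tangent_unit, speed_pos; auto.
  - intros j Hj. apply nablas_orthogonal, speed_pos; auto.
  - intros j Hj k Hk.
    rewrite <- (junction_velocity_eq Hconc t Ht j Hj k Hk). apply junction_velocity_decomp; auto.
Qed.

End TripleJunction.

Theorem mainTheorem10 :
  (forall (n : nat) (T : R) (f : nat -> R -> R -> vec) (lambda : nat -> R)
          (phi : nat -> R -> R -> R),
     0 < T ->
     (forall i k, (i < 3)%nat -> (k < n)%nat -> smooth_on T (vcomp (f i) k)) ->
     (forall i k, (i < 3)%nat -> (k < n)%nat ->
        cont_on (fun t x => 0 <= t < T /\ Iset x) (vcomp (f i) k)) ->
     (forall i, (i < 3)%nat -> smooth_on T (phi i)) ->
     (forall i t x, (i < 3)%nat -> 0 < t < T -> Iset x -> 0 < speed n (f i) t x) ->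
     (forall i t x k, (i < 3)%nat -> 0 < t < T -> Iset x -> (k < n)%nat ->
        dtv (f i) t x k =
          - nablas n (f i) (nablas n (f i) (kappa n (f i))) t x k
          - / 2 * inner n (kappa n (f i) t x) (kappa n (f i) t x) * kappa n (f i) t x k
          + lambda i * kappa n (f i) t x k
          + phi i t x * tangent n (f i) t x k) ->
     (forall i t k, (i < 3)%nat -> 0 < t < T -> (k < n)%nat -> kappa n (f i) t 0 k = 0) ->
     veq n (f 0%nat 0 0) (f 1%nat 0 0) -> veq n (f 1%nat 0 0) (f 2%nat 0 0) ->
     ((forall t, 0 < t < T ->
         veq n (f 0%nat t 0) (f 1%nat t 0) /\ veq n (f 1%nat t 0) (f 2%nat t 0)) <->
      (forall t, 0 < t < T -> forall i j, (i < 3)%nat -> (j < 3)%nat ->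
         veq n (dtv (f i) t 0) (dtv (f j) t 0))) /\
     ((forall t, 0 < t < T ->
         veq n (f 0%nat t 0) (f 1%nat t 0) /\ veq n (f 1%nat t 0) (f 2%nat t 0)) ->
      forall t, 0 < t < T -> forall i, (i < 3)%nat ->
        sumR 3 (fun j => Mmat n (fun l => tangent n (f l) t 0) i j * phi j t 0) =
        - (inner n (nablas n (f ((i + 1) mod 3)%nat)
                      (nablas n (f ((i + 1) mod 3)%nat) (kappa n (f ((i + 1) mod 3)%nat))) t 0)
                   (tangent n (f i) t 0)
           + inner n (nablas n (f ((i + 2) mod 3)%nat)
                      (nablas n (f ((i + 2) mod 3)%nat) (kappa n (f ((i + 2) mod 3)%nat))) t 0)
                   (tangent n (f i) t 0))))
  /\
  (forall (n : nat) (Tv : nat -> vec),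
     (forall i, (i < 3)%nat -> inner n (Tv i) (Tv i) = 1) ->
     det3 (Mmat n Tv) =
       8 - 2 * ((inner n (Tv 0%nat) (Tv 1%nat)) ^ 2 + (inner n (Tv 1%nat) (Tv 2%nat)) ^ 2
                + (inner n (Tv 0%nat) (Tv 2%nat)) ^ 2)
         - 2 * inner n (Tv 0%nat) (Tv 1%nat) * inner n (Tv 1%nat) (Tv 2%nat)
             * inner n (Tv 0%nat) (Tv 2%nat) /\
     det3 (Mmat n Tv) >=
       2 * (1 - inner n (Tv 0%nat) (Tv 1%nat) * inner n (Tv 1%nat) (Tv 2%nat)
                  * inner n (Tv 0%nat) (Tv 2%nat)) /\
     2 * (1 - inner n (Tv 0%nat) (Tv 1%nat) * inner n (Tv 1%nat) (Tv 2%nat)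
                * inner n (Tv 0%nat) (Tv 2%nat)) >= 0 /\
     (det3 (Mmat n Tv) = 0 <->
        ((veq n (Tv 0%nat) (Tv 1%nat) /\ veq n (Tv 1%nat) (Tv 2%nat)) \/
         exists i, (i < 3)%nat /\ veq n (Tv i) (Tv ((i + 1) mod 3)%nat) /\
                   veq n (Tv ((i + 2) mod 3)%nat) (fun k => - Tv i k))) /\
     (span_dim_ge2 n Tv -> posdef3 (Mmat n Tv))).
Proof.
  split.
  - intros n T f lambda phi HT Hf Hc _ Hspeed Hflow Hkappa E01 E12.
    split; [split|].
    + exact (junction_velocities_agree n T f Hf).
    + exact (concurrent_of_junction_velocity_eq n T f HT Hf Hc (conj E01 E12)).
    + exact (junction_phi_system n T f lambda phi Hf Hspeed Hflow Hkappa).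
  - intros n Tv Hunit.
    split; [apply det3_Mmat|]. split; [apply det3_Mmat_ge; exact Hunit|].
    split; [apply det3_Mmat_bound_ge0; exact Hunit|].
    split; [apply det3_Mmat_eq0; exact Hunit | apply Mmat_posdef; exact Hunit].
Qed.
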